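(* (i) The first-order supertransvectant $J^{\lambda,\mu}_1$, i.e. the bracket $[f,g]=\mu\,f'\,g-\lambda\,f\,g'-(-1)^{\sigma(f)}\,\tfrac{1}{2}\,\overline{D}(f)\,\overline{D}(g)$, corresponds to the Poisson bracket on $\mathbb{R}^{2|1}$: $$F_{[f,g]}=\frac{1}{2}\,\{F_f,F_g\}.$$ (ii) The supertransvectant of order $\tfrac12$, i.e. the odd bracket $(f,g)=\mu\,\overline{D}(f)\,g-(-1)^{\sigma(f)}\,\lambda\,f\,\overline{D}(g)$, corresponds to the ghost Poisson bracket: $$F_{(f,g)}=-\frac{1}{2}\,\{F_f,F_g\}_{\rm gPb}.$$
   Context: The supercircle $S^{1|1}$ has function algebra $C^\infty_{\mathbb{C}}(S^1)[\xi]$ with $\xi$ odd, $\xi^2=0$; functions are $f(x,\xi)=f_0(x)+\xi f_1(x)$, with parity $\sigma(f_0)=0$, $\sigma(\xi f_1)=1$. For $\lambda\in\mathbb{C}$, $\mathcal{F}_\lambda$ denotes this space of functions regarded as $\lambda$-densities (with the $\mathrm{OSp}(1|2)$ fraction-linear action of weight $\lambda$). Let $\overline{D}=\frac{\partial}{\partial\xi}-\xi\frac{\partial}{\partial x}$ and $f'=\partial f/\partial x$. Take $f\in\mathcal{F}_\lambda$, $g\in\mathcal{F}_\mu$. On $\mathbb{R}^{2|1}$ with coordinates $(p,q,\tau)$ ($\tau$ odd), the Poisson bracket is $\{F,G\}=\frac{\partial F}{\partial p}\frac{\partial G}{\partial q}-\frac{\partial F}{\partial q}\frac{\partial G}{\partial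 p}+\frac{\partial F}{\partial \tau}\frac{\partial G}{\partial \tau}$, the Euler field is $\mathcal{E}=p\frac{\partial}{\partial p}+q\frac{\partial}{\partial q}+\tau\frac{\partial}{\partial \tau}$, and the ghost Poisson bracket is $\{F,G\}_{\rm gPb}=\frac{\partial F}{\partial \tau}\,\mathcal{E}(G)-(-1)^{\sigma(F)}\,\mathcal{E}(F)\,\frac{\partial G}{\partial \tau}+\tau\left(\frac{\partial F}{\partial p}\frac{\partial G}{\partial q}-\frac{\partial F}{\partial q}\frac{\partial G}{\partial p}\right)$. The symplectic lifting associates to $f\in\mathcal{F}_\lambda$ the function homogeneous of degree $-2\lambda$ on $\mathbb{R}^{2|1}$ $$F_f(p,q,\tau)=p^{-2\lambda}f\!\left(\tfrac{q}{p},\tfrac{\tau}{p}\right)=p^{-2\lambda}f_0\!\left(\tfrac{q}{p}\right)+\tau\,p^{-2\lambda-1}f_1\!\left(\tfrac{q}{p}\right).$$ Note that $[f,g]\in\mathcal{F}_{\lambda+\mu+1}$ and $(f,g)\in\mathcal{F}_{\lambda+\mu+\frac12}$. *)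

From Stdlib Require Import Reals.
From Coquelicot Require Import Coquelicot.

Set Implicit Arguments.

Local Open Scope R_scope.

Definition Cderiv (f : R -> C) (x : R) : C :=
  (Derive (fun t => Re (f t)) x, Derive (fun t => Im (f t)) x).

Definition smoothR (g : R -> R) : Prop :=
  forall (n : nat) (x : R), ex_derive (Derive_n g n) x.

Definition smoothC (f : R -> C) : Prop :=
  smoothR (fun t => Re (f t)) /\ smoothR (fun t => Im (f t)).

(** Complex power [p ^ z := exp (z ln p)] of a positive real [p]. *)
Definition cpow (p : R) (z : C) : C :=
  (exp (Re z * ln p) * cos (Im z * ln p), exp (Re z * ln p) * sin (Im z * ln p)).

Local Open Scope C_scope.

(** * Superfunctions on the supercircle S^{1|1}:
      f(x, xi) = f0(x) + xi f1(x), represented by the pair (f0, f1). *)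
Record sfun := SFun { sf0 : R -> C ; sf1 : R -> C }.

Definition sfun_smooth (f : sfun) : Prop := smoothC (sf0 f) /\ smoothC (sf1 f).

(** Homogeneity of parity [s] (false = even, true = odd):
    even means f = f0, odd means f = xi f1. *)
Definition homogeneous (s : bool) (f : sfun) : Prop :=
  if s then (forall x, sf0 f x = 0) else (forall x, sf1 f x = 0).

Definition sgn (s : bool) : C := if s then -1 else 1.

Definition sf_add (f g : sfun) : sfun :=
  SFun (fun x => sf0 f x + sf0 g x) (fun x => sf1 f x + sf1 g x).
Definition sf_scal (c : C) (f : sfun) : sfun :=
  SFun (fun x => c * sf0 f x) (fun x => c * sf1 f x).
(** (a0 + xi a1)(b0 + xi b1) = a0 b0 + xi (a1 b0 + a0 b1) *)
Definition sf_mul (f g : sfun) : sfun :=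
  SFun (fun x => sf0 f x * sf0 g x)
       (fun x => sf1 f x * sf0 g x + sf0 f x * sf1 g x).

Definition sf_dx (f : sfun) : sfun := SFun (Cderiv (sf0 f)) (Cderiv (sf1 f)).

(** Dbar = d/dxi - xi d/dx : Dbar(f0 + xi f1) = f1 - xi f0' *)
Definition Dbar (f : sfun) : sfun :=
  SFun (sf1 f) (fun x => - Cderiv (sf0 f) x).

Definition sbracket (lam mu : C) (s : bool) (f g : sfun) : sfun :=
  sf_add (sf_add (sf_scal mu (sf_mul (sf_dx f) g))
                 (sf_scal (- lam) (sf_mul f (sf_dx g))))
         (sf_scal (- (sgn s * / 2)) (sf_mul (Dbar f) (Dbar g))).

Definition sodd_bracket (lam mu : C) (s : bool) (f g : sfun) : sfun :=
  sf_add (sf_scal mu (sf_mul (Dbar f) g))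
         (sf_scal (- (sgn s * lam)) (sf_mul f (Dbar g))).

(** * Superfunctions on R^{2|1}:
      F(p,q,tau) = F0(p,q) + tau F1(p,q), represented by (F0, F1). *)
Record sfun2 := SFun2 { sg0 : R -> R -> C ; sg1 : R -> R -> C }.

Definition s2_add (F G : sfun2) : sfun2 :=
  SFun2 (fun p q => sg0 F p q + sg0 G p q) (fun p q => sg1 F p q + sg1 G p q).
Definition s2_sub (F G : sfun2) : sfun2 :=
  SFun2 (fun p q => sg0 F p q - sg0 G p q) (fun p q => sg1 F p q - sg1 G p q).
Definition s2_scal (c : C) (F : sfun2) : sfun2 :=
  SFun2 (fun p q => c * sg0 F p q) (fun p q => c * sg1 F p q).
Definition s2_mul (F G : sfun2) : sfun2 :=
  SFun2 (fun p q => sg0 F p q * sg0 G p q)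
        (fun p q => sg1 F p q * sg0 G p q + sg0 F p q * sg1 G p q).

Definition s2_dp (F : sfun2) : sfun2 :=
  SFun2 (fun p q => Cderiv (fun p' => sg0 F p' q) p)
        (fun p q => Cderiv (fun p' => sg1 F p' q) p).
Definition s2_dq (F : sfun2) : sfun2 :=
  SFun2 (fun p q => Cderiv (fun q' => sg0 F p q') q)
        (fun p q => Cderiv (fun q' => sg1 F p q') q).
Definition s2_dtau (F : sfun2) : sfun2 := SFun2 (sg1 F) (fun _ _ => 0).

Definition s2_tau (F : sfun2) : sfun2 := SFun2 (fun _ _ => 0) (sg0 F).

Definition euler (F : sfun2) : sfun2 :=
  s2_add (s2_add (s2_mul (SFun2 (fun p _ => RtoC p) (fun _ _ => 0)) (s2_dp F))
                 (s2_mul (SFun2 (fun _ q => RtoC q) (fun _ _ => 0)) (s2_dq F)))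
         (s2_tau (s2_dtau F)).

Definition poisson (F G : sfun2) : sfun2 :=
  s2_add (s2_sub (s2_mul (s2_dp F) (s2_dq G)) (s2_mul (s2_dq F) (s2_dp G)))
         (s2_mul (s2_dtau F) (s2_dtau G)).

Definition ghost_poisson (s : bool) (F G : sfun2) : sfun2 :=
  s2_add (s2_sub (s2_mul (s2_dtau F) (euler G))
                 (s2_scal (sgn s) (s2_mul (euler F) (s2_dtau G))))
         (s2_tau (s2_sub (s2_mul (s2_dp F) (s2_dq G)) (s2_mul (s2_dq F) (s2_dp G)))).

(** Symplectic lifting of f in F_lambda:
    F_f(p,q,tau) = p^{-2 lambda} f0(q/p) + tau p^{-2 lambda - 1} f1(q/p)
    (defined for p > 0). *)
Definition lift (lam : C) (f : sfun) : sfun2 :=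
  SFun2 (fun p q => cpow p (- (2 * lam)) * sf0 f (q / p)%R)
        (fun p q => cpow p (- (2 * lam) - 1) * sf1 f (q / p)%R).

Definition s2_eq_on_pos (F G : sfun2) : Prop :=
  forall p q : R, (0 < p)%R -> sg0 F p q = sg0 G p q /\ sg1 F p q = sg1 G p q.

From Stdlib Require Import Reals Lra.
From Coquelicot Require Import Coquelicot.

(* By the chain rule the p- and q-derivatives of a lift p^z h(q/p) are again lifts:
   d/dq is p^(z-1) h'(q/p) and d/dp is p^(z-1) (z h(q/p) - (q/p) h'(q/p)).  After this
   substitution both sides of (i) and (ii) are rational expressions in p, q, the powers
   p^(-2 lambda), p^(-2 mu) and the values of f_i, f_i', g_i, g_i' at q/p, and they agree
   once homogeneity of f kills f_0 or f_1: the sign (-1)^sigma(f) in the brackets is only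
   meaningful for homogeneous f. *)

Local Open Scope R_scope.

Definition is_Cderive (h : R -> C) (x : R) (d : C) : Prop :=
  is_derive (fun t => Re (h t)) x (Re d) /\ is_derive (fun t => Im (h t)) x (Im d).

Lemma Cderiv_unique (h : R -> C) (x : R) (d : C) : is_Cderive h x d -> Cderiv h x = d.
Proof.
  intros [Hre Him]; unfold Cderiv.
  assert (Ere : Derive (fun t => Re (h t)) x = Re d) by exact (is_derive_unique _ _ _ Hre).
  assert (Eim : Derive (fun t => Im (h t)) x = Im d) by exact (is_derive_unique _ _ _ Him).
  rewrite Ere, Eim; destruct d; reflexivity.
Qed.

Lemma smoothC_is_Cderive (h : R -> C) (x : R) : smoothC h -> is_Cderive h x (Cderiv h x).
Proof.
  intros [Hre Him]; split; apply Derive_correct; [exact (Hre O x) | exact (Him O x)].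
Qed.

Lemma Cderiv_eq0 (h : R -> C) (x : R) : (forall t, h t = 0%C) -> Cderiv h x = 0%C.
Proof.
  intros H0; apply Cderiv_unique.
  split; apply (is_derive_ext (fun _ => 0)); try (intro t; rewrite H0; reflexivity);
    exact (is_derive_const _ _).
Qed.

Lemma is_Cderive_mult (h k : R -> C) (x : R) (dh dk : C) :
  is_Cderive h x dh -> is_Cderive k x dk ->
  is_Cderive (fun t => (h t * k t)%C) x (dh * k x + h x * dk)%C.
Proof.
  intros [Hre Him] [Kre Kim].
  assert (Dmult : forall (u v : R -> R) du dv, is_derive u x du -> is_derive v x dv ->
            is_derive (fun t => u t * v t) x (du * v x + u x * dv)).
  { intros u v du dv Du Dv; apply (is_derive_mult u v); auto using Rmult_comm. }
  split.
  - replace (Re (dh * k x + h x * dk)%C)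
      with ((Re dh * Re (k x) + Re (h x) * Re dk) - (Im dh * Im (k x) + Im (h x) * Im dk))
      by (destruct dh, dk, (h x), (k x); simpl; ring).
    apply (is_derive_minus (fun t => Re (h t) * Re (k t)) (fun t => Im (h t) * Im (k t)));
      auto.
  - replace (Im (dh * k x + h x * dk)%C)
      with ((Re dh * Im (k x) + Re (h x) * Im dk) + (Im dh * Re (k x) + Im (h x) * Re dk))
      by (destruct dh, dk, (h x), (k x); simpl; ring).
    apply (is_derive_plus (fun t => Re (h t) * Im (k t)) (fun t => Im (h t) * Re (k t)));
      auto.
Qed.

Lemma is_Cderive_const_mult (c : C) (h : R -> C) (x : R) (dh : C) :
  is_Cderive h x dh -> is_Cderive (fun t => (c * h t)%C) x (c * dh)%C.
Proof.
  intros Dh.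
  assert (Dc : is_Cderive (fun _ => c) x 0%C) by (split; exact (is_derive_const _ _)).
  replace (c * dh)%C with (0 * h x + c * dh)%C by ring.
  exact (is_Cderive_mult _ _ _ _ _ Dc Dh).
Qed.

Lemma is_Cderive_comp (h : R -> C) (u : R -> R) (x du : R) (dh : C) :
  is_Cderive h (u x) dh -> is_derive u x du ->
  is_Cderive (fun t => h (u t)) x (dh * RtoC du)%C.
Proof.
  intros [Hre Him] Du; split.
  - replace (Re (dh * RtoC du)%C) with (du * Re dh) by (destruct dh; simpl; ring).
    exact (is_derive_comp (fun t => Re (h t)) u x _ _ Hre Du).
  - replace (Im (dh * RtoC du)%C) with (du * Im dh) by (destruct dh; simpl; ring).
    exact (is_derive_comp (fun t => Im (h t)) u x _ _ Him Du).
Qed.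

Lemma is_Cderive_cpow (z : C) (p : R) :
  0 < p -> is_Cderive (fun t => cpow t z) p (z * cpow p z / RtoC p)%C.
Proof.
  intros Hp; destruct z as [a b]; unfold cpow; split; unfold Cdiv, Cmult, Cinv; simpl;
    auto_derive; auto; field; lra.
Qed.

Lemma cpow_add (p : R) (z w : C) : cpow p (z + w) = (cpow p z * cpow p w)%C.
Proof.
  destruct z as [a b], w as [c d]; unfold cpow, Cmult; simpl.
  rewrite !Rmult_plus_distr_r, exp_plus, cos_plus, sin_plus; f_equal; ring.
Qed.

Lemma cpow_sub1 (p : R) (z : C) : 0 < p -> cpow p (z - 1) = (cpow p z / RtoC p)%C.
Proof.
  intros Hp; unfold Cminus, Cdiv; rewrite cpow_add; f_equal.
  unfold cpow, Cinv; simpl.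
  replace (- (1) * ln p) with (- ln p) by ring; replace (- 0 * ln p) with 0 by ring.
  rewrite exp_Ropp, exp_ln, cos_0, sin_0 by exact Hp; f_equal; field; lra.
Qed.

Local Open Scope C_scope.

Lemma RtoC_pos_neq0 (p : R) : (0 < p)%R -> RtoC p <> 0.
Proof. intros Hp E; apply RtoC_inj in E; lra. Qed.

Lemma Cderiv_lift_p (z : C) (h : R -> C) (p q : R) :
  (0 < p)%R -> is_Cderive h (q / p)%R (Cderiv h (q / p)%R) ->
  Cderiv (fun p' => cpow p' z * h (q / p')%R) p
  = cpow p z * (z * h (q / p)%R - RtoC q / RtoC p * Cderiv h (q / p)%R) / RtoC p.
Proof.
  intros Hp Dh; apply Cderiv_unique.
  assert (Du : is_derive (fun p' => q / p')%R p (- q / (p * p))%R)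
    by (auto_derive; [lra | field; lra]).
  pose proof (is_Cderive_mult _ _ _ _ _ (is_Cderive_cpow z p Hp)
                (is_Cderive_comp h (fun p' => q / p')%R p _ _ Dh Du)) as D.
  replace (cpow p z * (z * h (q / p)%R - RtoC q / RtoC p * Cderiv h (q / p)%R) / RtoC p)
    with (z * cpow p z / RtoC p * h (q / p)%R
          + cpow p z * (Cderiv h (q / p)%R * RtoC (- q / (p * p))%R));
    [exact D |].
  rewrite RtoC_div, RtoC_mult, RtoC_opp by (apply Rgt_not_eq, Rmult_lt_0_compat; exact Hp).
  field; auto using RtoC_pos_neq0.
Qed.

Lemma Cderiv_lift_q (z : C) (h : R -> C) (p q : R) :
  (0 < p)%R -> is_Cderive h (q / p)%R (Cderiv h (q / p)%R) ->
  Cderiv (fun q' => cpow p z * h (q' / p)%R) q = cpow p z * Cderiv h (q / p)%R / RtoC p.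
Proof.
  intros Hp Dh; apply Cderiv_unique.
  assert (Du : is_derive (fun q' => q' / p)%R q (/ p)%R)
    by (auto_derive; [lra | field; lra]).
  pose proof (is_Cderive_const_mult (cpow p z) _ _ _
                (is_Cderive_comp h (fun q' => q' / p)%R q _ _ Dh Du)) as D.
  replace (cpow p z * Cderiv h (q / p)%R / RtoC p)
    with (cpow p z * (Cderiv h (q / p)%R * RtoC (/ p)%R)); [exact D |].
  rewrite RtoC_inv by lra.
  field; auto using RtoC_pos_neq0.
Qed.

Ltac expand_lifted_brackets :=
  unfold lift, sbracket, sodd_bracket, poisson, ghost_poisson, euler,
    s2_add, s2_sub, s2_scal, s2_mul, s2_dp, s2_dq, s2_dtau, s2_tau,
    sf_add, sf_scal, sf_mul, sf_dx, Dbar;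
  cbn [sg0 sg1 sf0 sf1];
  rewrite !Cderiv_lift_p, !Cderiv_lift_q by (auto using smoothC_is_Cderive).

Ltac close_by_homogeneity Hom Hp :=
  pose proof (RtoC_pos_neq0 _ Hp);
  match type of Hom with homogeneous ?s ?f =>
    destruct s; simpl in Hom |- *;
    [ rewrite (Cderiv_eq0 (sf0 f)), !Hom by exact Hom
    | rewrite (Cderiv_eq0 (sf1 f)), !Hom by exact Hom ];
    split; field; auto
  end.

Lemma lift_sbracket (lam mu : C) (s : bool) (f g : sfun) :
  sfun_smooth f -> sfun_smooth g -> homogeneous s f ->
  s2_eq_on_pos (lift (lam + mu + 1) (sbracket lam mu s f g))
               (s2_scal (/ 2) (poisson (lift lam f) (lift mu g))).
Proof.
  intros [Sf0 Sf1] [Sg0 Sg1] Hom p q Hp.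
  expand_lifted_brackets.
  replace (- (2 * (lam + mu + 1))) with (- (2 * lam) + - (2 * mu) - 1 - 1) by ring.
  rewrite !cpow_sub1, cpow_add by exact Hp.
  close_by_homogeneity Hom Hp.
Qed.

Lemma lift_sodd_bracket (lam mu : C) (s : bool) (f g : sfun) :
  sfun_smooth f -> sfun_smooth g -> homogeneous s f ->
  s2_eq_on_pos (lift (lam + mu + / 2) (sodd_bracket lam mu s f g))
               (s2_scal (- / 2) (ghost_poisson s (lift lam f) (lift mu g))).
Proof.
  intros [Sf0 Sf1] [Sg0 Sg1] Hom p q Hp.
  expand_lifted_brackets.
  replace (- (2 * (lam + mu + / 2))) with (- (2 * lam) + - (2 * mu) - 1) by field.
  rewrite !cpow_sub1, cpow_add by exact Hp.
  close_by_homogeneity Hom Hp.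
Qed.

Theorem proposition3p1 :
  forall (lam mu : C) (s : bool) (f g : sfun),
    sfun_smooth f -> sfun_smooth g ->
    homogeneous s f ->
    s2_eq_on_pos (lift (lam + mu + 1) (sbracket lam mu s f g))
                 (s2_scal (/ 2) (poisson (lift lam f) (lift mu g)))
    /\
    s2_eq_on_pos (lift (lam + mu + / 2) (sodd_bracket lam mu s f g))
                 (s2_scal (- / 2) (ghost_poisson s (lift lam f) (lift mu g))).
Proof.
  intros lam mu s f g Sf Sg Hom; split.
  - exact (lift_sbracket lam mu s f g Sf Sg Hom).
  - exact (lift_sodd_bracket lam mu s f g Sf Sg Hom).
Qed.
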